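(* Let $P\subset\mathbb{R}^n$ be the moment polytope of a compact symplectic toric manifold. If the toric fiber $L(\mathbf{u})$ over a point $\mathbf{u}\in\mathrm{Int}(P)$ is strongly bulk-balanced, then $\mathbf{u}\in\mathrm{Trop}(P,\mathbf{m})$ for every $\mathbf{m}\in\mathbb{Z}^n$.
   Context: $P=\bigcap_{j=1}^m\{\mathbf{u}:\ell_j(\mathbf{u})\ge0\}$, $\ell_j(\mathbf{u})=\langle\mathbf{u},\mathbf{v}_j\rangle-\lambda_j$, $\mathbf{v}_j\in\mathbb{Z}^n$ primitive inward facet normals, half-spaces non-redundant. $\mathrm{Trop}(P,\mathbf{m})$ is the non-differentiable locus of $\mathbf{u}\mapsto\min\{\ell_j(\mathbf{u}):\langle\mathbf{m},\mathbf{v}_j\rangle\neq0\}$, i.e. where the minimum is attained by at least two distinct such indices; $\mathrm{Trop}(P,\mathbf{0})=\mathbb{R}^n$. Strongly bulk-balanced: let $S_1<S_2<\cdots$ be the distinct values of $\ell_j(\mathbf{u})$, $I_l=\{j:\ell_j(\mathbf{u})=S_l\}$, $A^\perp_l=\mathrm{span}_\mathbb{R}\{\mathbf{v}_j:j\in I_1\cup\dots\cup I_l\}$, $d_l=\dim A^\perp_l-\dim A^\perp_{l-1}$, $\kappa$ minimal with $A^\perp_\kappa=\mathbb{R}^n$. Choose $e^*_{r,s}\in\mathbb{Q}^n$ ($1\le r\le\kappa$, $1\le s\le d_r$) such that $\{e^*_{r,s}:r\le l\}$ is a $\mathbb{Q}$-basis of $A^\perp_l\cap\mathbb{Q}^n$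 for all $l$ and each $\mathbf{v}_j\in\bigoplus\mathbb{Z}e^*_{r,s}$; with $\mathbf{v}_j=\sum v_j^{r,s}e^*_{r,s}$ set $\mathbf{y}^{\mathbf{v}_j}=\prod y_{r,s}^{v_j^{r,s}}$. For $c\in(\mathbb{C}^* )^m$ let $F_l^c=\sum_{j\in I_l}c_j\mathbf{y}^{\mathbf{v}_j}$. $L(\mathbf{u})$ is strongly bulk-balanced if for some $c$ the system $y_{l,s}\partial F^c_l/\partial y_{l,s}=0$ ($1\le l\le\kappa$, $1\le s\le d_l$) has a solution in $(\mathbb{C}^* )^n$; the existence of such a solution does not depend on the choice of the $e^*_{r,s}$. *)

From HB Require Import structures.
From mathcomp Require Import all_boot all_order all_algebra.
From mathcomp Require Import reals.
From mathcomp Require Import complex.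
Set Implicit Arguments. Unset Strict Implicit. Unset Printing Implicit Defensive.
Import Order.TTheory GRing.Theory Num.Theory.
Local Open Scope ring_scope.

Section Toric.
Variables (R : realType) (n m : nat).
(* facet data: v j = inward primitive normal (in Z^n), lam j = constant *)
Variables (v : 'I_m -> 'I_n -> int) (lam : 'I_m -> R).

Definition ell (j : 'I_m) (u : 'I_n -> R) : R :=
  \sum_(i < n) u i * (v j i)%:~R - lam j.

Definition inP (u : 'I_n -> R) : Prop := forall j, 0 <= ell j u.

(* Int(P): all defining inequalities strict (= topological interior, v_j <> 0) *)
Definition inIntP (u : 'I_n -> R) : Prop := forall j, 0 < ell j u.

Definition primitive_vec (w : 'I_n -> int) : Prop :=
  forall d : int, (forall i, (d %| w i)%Z) -> `|d| = 1.

Definition non_redundant : Prop :=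
  forall j, exists u : 'I_n -> R,
    (forall j', j' != j -> 0 <= ell j' u) /\ ell j u < 0.

Definition bounded : Prop :=
  exists B : R, forall u, inP u -> forall i, `|u i| <= B.

Definition is_vertex (u : 'I_n -> R) : Prop :=
  inP u /\ forall x : 'I_n -> R, exists b : 'I_m -> R,
    (forall j, ell j u != 0 -> b j = 0) /\
    forall i, x i = \sum_(j < m) b j * (v j i)%:~R.

Definition delzant_vertices : Prop :=
  forall u, is_vertex u -> exists f : 'I_n -> 'I_m,
    injective f /\ (forall j, ell j u = 0 <-> exists k, j = f k) /\
    `|\det (\matrix_(k, i) v (f k) i)| = 1.

(* P is the moment polytope of a compact symplectic toric manifold
   (via Delzant's theorem: a Delzant polytope), given by a non-redundant
   presentation with primitive inward normals. *)
Definition delzant_polytope : Prop :=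
  [/\ forall j, primitive_vec (v j), non_redundant, bounded & delzant_vertices].

Definition pair (mm : 'I_n -> int) (j : 'I_m) : int := \sum_(i < n) mm i * v j i.

(* Trop(P, mm): R^n if mm = 0, otherwise the non-differentiability locus of
   u |-> min { ell_j u : <mm, v_j> <> 0 }, i.e. the minimum is attained by at
   least two distinct such indices. *)
Definition Trop (mm : 'I_n -> int) (u : 'I_n -> R) : Prop :=
  (forall i, mm i = 0) \/
  exists j1 j2 : 'I_m, [/\ j1 != j2, pair mm j1 != 0, pair mm j2 != 0,
    ell j1 u = ell j2 u &
    forall j, pair mm j != 0 -> ell j1 u <= ell j u].

(* level of j at u: l such that ell_j(u) = S_l, where S_1 < S_2 < ... are the
   distinct values of ell_j(u) (1-based) *)
Definition level (u : 'I_n -> R) (j : 'I_m) : nat :=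
  (size (undup [seq ell i u | i <- enum 'I_m & ell i u < ell j u])).+1.

Definition in_Aperp (u : 'I_n -> R) (l : nat) (x : 'I_n -> rat) : Prop :=
  exists b : 'I_m -> R, forall i,
    ratr (x i) = \sum_(j < m | (level u j <= l)%N) b j * (v j i)%:~R.

(* An admissible choice of the e*_{r,s}: the index pair (r,s) is encoded by
   k : 'I_n with r = lev k (s enumerates {k | lev k = r}); for every l the
   family {e k : lev k <= l} is a Q-basis of A^perp_l cap Q^n, and each
   v_j = sum_k a j k e k with integer coefficients a j k = v_j^{r,s}. *)
Definition admissible_basis (u : 'I_n -> R) (lev : 'I_n -> nat)
    (e : 'I_n -> 'I_n -> rat) (a : 'I_m -> 'I_n -> int) : Prop :=
  [/\ forall l : nat,
        (forall c : 'I_n -> rat,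
           (forall i, \sum_(k < n | (lev k <= l)%N) c k * e k i = 0) ->
           forall k, (lev k <= l)%N -> c k = 0) /\
        (forall x : 'I_n -> rat,
           in_Aperp u l x <->
           exists c : 'I_n -> rat, forall i,
             x i = \sum_(k < n | (lev k <= l)%N) c k * e k i)
    & forall j i, ((v j i)%:~R : rat) = \sum_(k < n) (a j k)%:~R * e k i].

Definition ymon (a : 'I_m -> 'I_n -> int) (y : 'I_n -> R[i]) (j : 'I_m) : R[i] :=
  \prod_(k < n) y k ^ a j k.

(* y_{l,s} dF_l^c/dy_{l,s} = sum_{j in I_l} c_j v_j^{l,s} y^{v_j}, with l = lev k *)
Definition strongly_bulk_balanced (u : 'I_n -> R) : Prop :=
  exists (lev : 'I_n -> nat) (e : 'I_n -> 'I_n -> rat) (a : 'I_m -> 'I_n -> int),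
    admissible_basis u lev e a /\
    exists (c : 'I_m -> R[i]) (y : 'I_n -> R[i]),
      (forall j, c j != 0) /\ (forall k, y k != 0) /\
      forall k, \sum_(j < m | level u j == lev k) c j * (a j k)%:~R * ymon a y j = 0.

End Toric.

From Pilot Require Import Defs.
From HB Require Import structures.
From mathcomp Require Import all_boot all_order all_algebra.
From mathcomp Require Import reals complex ring lra.
Set Implicit Arguments. Unset Strict Implicit. Unset Printing Implicit Defensive.
Import Order.TTheory GRing.Theory Num.Theory.
Local Open Scope ring_scope.

(* If the vector m is orthogonal to every v_j, translating u along m moves
   no ell_j, so boundedness of P forces m = 0.  Otherwise let j0 minimise ell_j(u)
   among the j with <m, v_j> <> 0, and suppose the minimum is attained only
   at j0.  Every v_j of level below l0 = level j0 is orthogonal to m, hence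
   so is every basis vector e_k of level below l0; and v_j of level l0 has no
   coordinates of level above l0.  Pairing the balancing equations of level
   l0 with the numbers <m, e_k> therefore yields
   sum_{level j = l0} c_j y^{v_j} <m, v_j> = 0, a sum whose only nonzero
   term is the one of j0. *)

Section Levels.
Variables (R : realType) (n m : nat) (v : 'I_m -> 'I_n -> int) (lam : 'I_m -> R).
Variables u : 'I_n -> R.

Local Notation level := (level v lam u).
Local Notation ell j := (ell v lam j u).

Lemma level_lt i j : ell i < ell j -> (level i < level j)%N.
Proof.
move=> ltij; rewrite /Defs.level ltnS.
set si := undup _; set sj := undup _.
have -> : (size si).+1 = size (ell i :: si) by [].
apply: uniq_leq_size.
  rewrite /= undup_uniq andbT mem_undup; apply/negP => /mapP [x].
  by rewrite mem_filter => /andP [lt_xi _] exi; rewrite -exi ltxx in lt_xi.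
move=> x; rewrite inE => /orP [/eqP -> | ].
  by rewrite mem_undup; apply/mapP; exists i => //; rewrite mem_filter ltij mem_enum.
rewrite !mem_undup => /mapP [k]; rewrite mem_filter => /andP [lt_ki _] ->.
by apply/mapP; exists k => //; rewrite mem_filter (lt_trans lt_ki ltij) mem_enum.
Qed.

Lemma leq_level i j : (level i <= level j)%N = (ell i <= ell j).
Proof.
case: (ltgtP (ell i) (ell j)) => [lt_ij | lt_ji | eq_ij].
- exact/ltnW/level_lt/lt_ij.
- by apply/negbTE; rewrite -ltnNge; apply: level_lt.
- by rewrite /Defs.level eq_ij leqnn.
Qed.

End Levels.

Section Translation.
Variables (R : realType) (n m : nat) (v : 'I_m -> 'I_n -> int) (lam : 'I_m -> R).

Lemma ell_translate (u : 'I_n -> R) (mm : 'I_n -> int) (t : R) j :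
  ell v lam j (fun k => u k + t * (mm k)%:~R) = ell v lam j u + t * (pair v mm j)%:~R.
Proof.
rewrite /ell /pair rmorph_sum mulr_sumr addrAC; congr (_ - _).
rewrite -big_split; apply: eq_bigr => i _ /=.
by rewrite rmorphM /=; ring.
Qed.

Lemma bounded_orthogonal_eq0 (u : 'I_n -> R) (mm : 'I_n -> int) :
  bounded v lam -> inP v lam u -> (forall j, pair v mm j = 0) -> forall i, mm i = 0.
Proof.
move=> [B boundB] uP orth i; apply/eqP/negPn/negP => mmi_neq0.
have mmi_neq0R : ((mm i)%:~R : R) != 0 by rewrite intr_eq0.
pose t : R := (B + 1 - u i) / (mm i)%:~R.
have wP : inP v lam (fun k => u k + t * (mm k)%:~R).
  by move=> j; rewrite ell_translate orth mulr0 addr0.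
have := boundB _ wP i; rewrite /t divfK // addrC subrK.
by move=> le_B; have := le_trans (ler_norm _) le_B; lra.
Qed.

End Translation.

Section AdmissibleBasis.
Variables (R : realType) (n m : nat) (v : 'I_m -> 'I_n -> int) (lam : 'I_m -> R).
Variables (u : 'I_n -> R) (lev : 'I_n -> nat).
Variables (e : 'I_n -> 'I_n -> rat) (a : 'I_m -> 'I_n -> int).
Hypothesis adm : admissible_basis v lam u lev e a.

Local Notation level := (level v lam u).

Lemma basis_in_Aperp k : in_Aperp v lam u (lev k) (e k).
Proof.
have [_ span] := adm.1 (lev k); apply/span.
exists (fun k' => (k' == k)%:R) => i.
rewrite (bigD1 k) //= eqxx mul1r big1 ?addr0 // => k' /andP [_ /negbTE ->].
by rewrite mul0r.
Qed.

Lemma coord_above_level_eq0 j k : (level j < lev k)%N -> a j k = 0.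
Proof.
move=> lt_jk; set l := level j.
have [cc v_coord] : exists cc : 'I_n -> rat, forall i,
    (v j i)%:~R = \sum_(k < n | (lev k <= l)%N) cc k * e k i.
  apply/((adm.1 l).2 (fun i => (v j i)%:~R)).
  exists (fun j' => (j' == j)%:R) => i.
  rewrite ratr_int (bigD1 j) //= eqxx mul1r big1 ?addr0 // => j' /andP [_ /negbTE ->].
  by rewrite mul0r.
pose L := \max_(k < n) lev k.
have levL k' : (lev k' <= L)%N by apply: leq_bigmax.
pose d k' : rat := (if (lev k' <= l)%N then cc k' else 0) - (a j k')%:~R.
suff /(_ k) : forall k', d k' = 0.
  by rewrite /d leqNgt lt_jk sub0r => /eqP; rewrite oppr_eq0 intr_eq0 => /eqP.
move=> k0; apply: (adm.1 L).1 (levL k0) => i.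
rewrite (eq_bigl xpredT) => [|k' /=]; last by rewrite levL.
under eq_bigr do rewrite /d mulrBl.
rewrite sumrB -adm.2 v_coord; apply/eqP; rewrite subr_eq0 [X in _ == X]big_mkcond.
by apply/eqP/eq_bigr => k' _; case: ifP; rewrite ?mul0r.
Qed.

Definition pairing (mm : 'I_n -> int) (x : 'I_n -> rat) : rat :=
  \sum_(i < n) (mm i)%:~R * x i.

Lemma pair_coord mm j :
  ((pair v mm j)%:~R : rat) = \sum_(k < n) (a j k)%:~R * pairing mm (e k).
Proof.
rewrite /pair rmorph_sum.
under eq_bigr do rewrite rmorphM /= adm.2 mulr_sumr.
rewrite exchange_big; apply: eq_bigr => k _; rewrite /pairing mulr_sumr.
by apply: eq_bigr => i _; rewrite mulrCA.
Qed.

Lemma pairing_basis_eq0 mm k :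
  (forall j, (level j <= lev k)%N -> pair v mm j = 0) -> pairing mm (e k) = 0.
Proof.
move=> orth; have [b e_span] := basis_in_Aperp k.
apply: (@fmorph_inj _ R ratr); rewrite rmorph0 rmorph_sum /=.
under eq_bigr do rewrite rmorphM /= ratr_int e_span mulr_sumr.
rewrite exchange_big /=; apply: big1 => j lev_j.
transitivity (b j * (pair v mm j)%:~R); last by rewrite orth // mulr0.
rewrite /pair rmorph_sum mulr_sumr; apply: eq_bigr => i _.
by rewrite rmorphM /= mulrCA.
Qed.

Lemma balanced_level_pair_eq0 (c Y : 'I_m -> R[i]) mm l0 :
  (forall k, \sum_(j < m | level j == lev k) c j * (a j k)%:~R * Y j = 0) ->
  (forall j, (level j < l0)%N -> pair v mm j = 0) ->
  \sum_(j < m | level j == l0) c j * Y j * (pair v mm j)%:~R = 0.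
Proof.
move=> balanced orth.
pose mu k : R[i] := ratr (pairing mm (e k)).
have pair_level j : level j = l0 ->
    (pair v mm j)%:~R = \sum_(k < n | lev k == l0) (a j k)%:~R * mu k.
  move=> lev_j; rewrite -ratr_int pair_coord rmorph_sum [RHS]big_mkcond.
  apply: eq_bigr => k _; rewrite rmorphM /= ratr_int.
  case: (ltngtP (lev k) l0) => [lt_k | gt_k | _] //.
  - rewrite /mu pairing_basis_eq0 ?rmorph0 ?mulr0 // => j' le_j'.
    by apply: orth; apply: leq_ltn_trans lt_k.
  - by rewrite coord_above_level_eq0 ?lev_j // mul0r.
transitivity (\sum_(k < n | lev k == l0) \sum_(j < m | level j == l0)
    mu k * (c j * (a j k)%:~R * Y j)); last first.
  by apply: big1 => k /eqP lev_k; rewrite -mulr_sumr -lev_k balanced mulr0.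
rewrite exchange_big /=; apply: eq_bigr => j /eqP lev_j.
rewrite pair_level // mulr_sumr; apply: eq_bigr => k _; ring.
Qed.

End AdmissibleBasis.

Lemma ymon_neq0 (R : realType) (n m : nat) (a : 'I_m -> 'I_n -> int)
    (y : 'I_n -> R[i]) j :
  (forall k, y k != 0) -> ymon a y j != 0.
Proof. by move=> y_neq0; apply/prodf_neq0 => k _; apply: expfz_neq0. Qed.

Theorem lemma6p3 (R : realType) (n m : nat)
    (v : 'I_m -> 'I_n -> int) (lam : 'I_m -> R) (u : 'I_n -> R) :
  delzant_polytope v lam ->
  inIntP v lam u ->
  strongly_bulk_balanced v lam u ->
  forall mm : 'I_n -> int, Trop v lam mm u.
Proof.
move=> [_ _ bnd _] uint [lev [e [a [adm [c [y [c_neq0 [y_neq0 balanced]]]]]]]] mm.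
case: (pickP (fun j => pair v mm j != 0)) => [j1 pj1 | orth]; last first.
  left; apply: (bounded_orthogonal_eq0 bnd (fun j => ltW (uint j))).
  by move=> j; apply/eqP/negbFE/orth.
have [j0 pj0 j0_min] :=
  arg_minP (P := fun j => pair v mm j != 0) (fun j => ell v lam j u) pj1.
case: (pickP (fun j => [&& j != j0, pair v mm j != 0 & ell v lam j u == ell v lam j0 u]))
  => [j2 /and3P [j2_neq pj2 /eqP ell_j2] | no_tie].
  by right; exists j0, j2; split; rewrite // eq_sym.
have orth_tie j : (level v lam u j <= level v lam u j0)%N -> j != j0 -> pair v mm j = 0.
  move=> le_j j_neq; apply/eqP; apply: contraFT (no_tie j) => pj.
  by rewrite j_neq pj eq_le j0_min // -leq_level le_j.
have orth_below j : (level v lam u j < level v lam u j0)%N -> pair v mm j = 0.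
  by move=> lt_j; apply: orth_tie (ltnW lt_j) _; apply: contraTneq lt_j => ->; rewrite ltnn.
have := balanced_level_pair_eq0 adm balanced orth_below.
rewrite (bigD1 j0) //= big1 ?addr0 => [/eqP|j /andP [/eqP lev_j j_neq]].
  by rewrite !mulf_eq0 (negbTE (c_neq0 j0)) (negbTE (ymon_neq0 a j0 y_neq0)) intr_eq0 (negbTE pj0).
by rewrite (orth_tie j) ?mulr0 // lev_j.
Qed.
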